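(* Let $\lambda=(\lambda_1,\ldots,\lambda_\ell)$ be a partition with $\ell$ positive parts, and let $n\geq\ell$. If there exists $p\in\{1,\ldots,\ell-2\}$ such that $\lambda_p-2\geq\lambda_{p+1}\geq\lambda_{p+2}$, then the poset $\mathcal B_\lambda^n$ is not a lattice.
   Context: For $N\geq 1$ and a partition $\nu$ with at most $N$ positive parts, $\mathcal B_\nu^N$ is the set of semistandard Young tableaux of shape $\nu$ (rows weakly increasing, columns strictly increasing) with entries in $\{1,\ldots,N+1\}$, partially ordered by the reflexive transitive closure of $T<F_i(T)$ for $i\in\{1,\ldots,N\}$ with $F_i(T)\neq 0$. Here $F_i$ is the type A crystal lowering operator: in the reading word of $T$ (rows read from bottom to top, each row left to right) keep only letters $i$ and $i+1$, replace each $i$ by '')'' and each $i+1$ by ''('', and match parentheses in the usual way; if there is no unmatched '')'', $F_i(T)=0$; otherwise $F_i(T)$ is obtained by changing the entry $i$ corresponding to the rightmost unmatched '')'' into $i+1$. *)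

From mathcomp Require Import all_boot.
From Stdlib Require Import Relations.
Set Implicit Arguments.
Unset Strict Implicit.
Unset Printing Implicit Defensive.

Definition is_partition (la : seq nat) : Prop :=
  sorted geq la /\ all (fun x => 0 < x) la.

(* A tableau is a list of rows (top row first); row r, column j entry is
   nth 0 (nth [::] T r) j. *)
Definition tableau := seq (seq nat).

Definition is_ssyt (N : nat) (nu : seq nat) (T : tableau) : Prop :=
  [/\ map size T = nu,
      all (all (fun x => 1 <= x <= N.+1)) T,
      all (sorted leq) T &
      forall r j, r.+1 < size T -> j < size (nth [::] T r.+1) ->
        nth 0 (nth [::] T r) j < nth 0 (nth [::] T r.+1) j].

Definition B (N : nat) (nu : seq nat) : tableau -> Prop := is_ssyt N nu.

Definition reading_word (T : tableau) : seq nat := flatten (rev T).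

(* Position (0-based, in the word) of the rightmost unmatched ")" where
   letter i is ")" and letter i+1 is "(".  [c] counts currently unmatched
   "(" seen so far; a ")" is matched with the nearest preceding unmatched "(". *)
Fixpoint rum (i : nat) (w : seq nat) (pos c : nat) (acc : option nat)
  : option nat :=
  match w with
  | [::] => acc
  | x :: w' =>
      if x == i then
        (if c == 0 then rum i w' pos.+1 0 (Some pos)
         else rum i w' pos.+1 c.-1 acc)
      else if x == i.+1 then rum i w' pos.+1 c.+1 acc
      else rum i w' pos.+1 c acc
  end.

(* Crystal lowering operator F_i; None stands for F_i(T) = 0. *)
Definition F (i : nat) (T : tableau) : option tableau :=
  let w := reading_word T in
  match rum i w 0 0 None with
  | None => None
  | Some k => Some (rev (reshape (rev (map size T)) (set_nth 0 w k i.+1)))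
  end.

Definition step (N : nat) (nu : seq nat) (T T' : tableau) : Prop :=
  B N nu T /\ B N nu T' /\ exists i, 1 <= i <= N /\ F i T = Some T'.

Definition Ble (N : nat) (nu : seq nat) : relation tableau :=
  clos_refl_trans tableau (step N nu).

Definition is_lub {T : Type} (S : T -> Prop) (le : T -> T -> Prop) (x y z : T) :=
  S z /\ le x z /\ le y z /\ forall w, S w -> le x w -> le y w -> le z w.
Definition is_glb {T : Type} (S : T -> Prop) (le : T -> T -> Prop) (x y z : T) :=
  S z /\ le z x /\ le z y /\ forall w, S w -> le w x -> le w y -> le w z.
Definition is_lattice {T : Type} (S : T -> Prop) (le : T -> T -> Prop) : Prop :=
  forall x y, S x -> S y ->
    (exists z, is_lub S le x y z) /\ (exists z, is_glb S le x y z).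

From mathcomp Require Import all_boot zify.
From Stdlib Require Import Relation_Operators Operators_Properties.

(* Let q = p - 1 be the 0-based index of row p.  Rows above q are filled with
   their 1-based index, rows below q + 2 with letters too large to interact,
   and rows q, q + 1, q + 2 are constant except for four free cells: the last
   two cells e1, e2 of row q and the last cells e3, e4 of rows q + 1, q + 2.
   Recording a filling by (e1 - q, e2 - q, e3 - q, e4 - q), both z1 = (1,4,3,4)
   and z2 = (3,4,2,4) lie above both x = (1,3,2,4) and y = (1,4,2,3).  Crystal
   operators only raise letters of the reading word, so the reading word of a
   join of x and y lies between the letterwise maximum of the words of x and y
   and the letterwise minimum of those of z1 and z2, which both equal the word
   of v = (1,4,2,4).  But no tableau above x has the word of v: the first step
   out of x would have to raise the cell e2 from q + 3 to q + 4, and F_(q+3)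
   cannot act there because that letter is bracketed by the q + 4 in cell e4. *)

Set Implicit Arguments.
Unset Strict Implicit.
Unset Printing Implicit Defensive.

Lemma rum_cons i x v pos c acc :
  rum i (x :: v) pos c acc =
  if x == i then (if c == 0 then rum i v pos.+1 0 (Some pos) else rum i v pos.+1 c.-1 acc)
  else if x == i.+1 then rum i v pos.+1 c.+1 acc
  else rum i v pos.+1 c acc.
Proof. by []. Qed.

Lemma rum_nseq i x k v pos c acc :
  rum i (nseq k x ++ v) pos c acc =
  if x == i then rum i v (pos + k) (c - k) (if c < k then Some (pos + k).-1 else acc)
  else if x == i.+1 then rum i v (pos + k) (c + k) acc
  else rum i v (pos + k) c acc.
Proof.
elim: k pos c acc => [|k IH] pos c acc /=.
  by rewrite !addn0 subn0; case: (x == i) => //; case: (x == i.+1).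
rewrite !IH; case: eqP => [_|_]; last by case: eqP => _; congr rum; lia.
case: c => [|c] /=; congr rum; try lia.
  by case: k {IH} => [|k] /=; congr Some; lia.
by rewrite ltnS; case: ifP => _ //; congr Some; lia.
Qed.

Lemma rum_cat_skip i u v pos c acc :
  all (fun x => (x != i) && (x != i.+1)) u ->
  rum i (u ++ v) pos c acc = rum i v (pos + size u) c acc.
Proof.
elim: u pos => [|x u IH] pos /=; first by rewrite addn0.
by case/andP=> /andP[/negbTE-> /negbTE->] /IH->; rewrite addSnnS.
Qed.

Lemma rum_Some i w pos c acc k :
  rum i w pos c acc = Some k ->
  acc = Some k \/ pos <= k < pos + size w /\ nth 0 w (k - pos) = i.
Proof.
elim: w pos c acc => [|x w IH] pos c acc /=; first by left.
have shift acc' :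
    acc' = Some k \/ pos.+1 <= k < pos.+1 + size w /\ nth 0 w (k - pos.+1) = i ->
    acc' = Some k \/ pos <= k < pos + (size w).+1 /\ nth 0 (x :: w) (k - pos) = i.
  case=> [|[hk hn]]; [by left | right; split; first lia].
  by rewrite (_ : k - pos = (k - pos.+1).+1) //; lia.
case: eqP => [xi|_]; last by case: ifP => _ /IH/shift.
case: ifP => _ /IH/shift // [[<-]|]; last by right.
by right; rewrite subnn xi; split=> //; lia.
Qed.

Lemma F_of_rum i k T T' :
  rum i (reading_word T) 0 0 None = Some k ->
  reading_word T' = set_nth 0 (reading_word T) k i.+1 ->
  map size T' = map size T -> F i T = Some T'.
Proof.
rewrite /F => -> <- shapeE; congr Some.
by rewrite -shapeE -map_rev /reading_word flattenK revK.
Qed.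

Lemma F_Some_word i T T' : F i T = Some T' -> exists k,
  [/\ rum i (reading_word T) 0 0 None = Some k, k < size (reading_word T),
      nth 0 (reading_word T) k = i &
      reading_word T' = set_nth 0 (reading_word T) k i.+1].
Proof.
rewrite /F; case E: rum => [k|] // [<-].
have [//|[hk]] := rum_Some E; rewrite subn0 => hki.
exists k; split => //.
rewrite /reading_word revK reshapeKr // size_set_nth size_flatten /shape map_rev.
by rewrite /reading_word size_flatten /shape map_rev in hk; lia.
Qed.

Definition word_le (u v : seq nat) : Prop :=
  size u = size v /\ forall k, nth 0 u k <= nth 0 v k.

Lemma word_le_trans u v w : word_le u v -> word_le v w -> word_le u w.
Proof.
move=> [uv luv] [vw lvw]; split=> [|k]; first by rewrite uv.
exact: leq_trans (luv k) (lvw k).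
Qed.

Lemma step_word_le N nu T T' :
  step N nu T T' -> word_le (reading_word T) (reading_word T').
Proof.
case=> _ [_ [i [_ /F_Some_word [k [_ hk hki ->]]]]].
split; first by rewrite size_set_nth; lia.
by move=> j; rewrite nth_set_nth /=; case: eqP => [->|//]; lia.
Qed.

Lemma Ble_word_le N nu T T' :
  Ble N nu T T' -> word_le (reading_word T) (reading_word T').
Proof.
elim=> [x y /step_word_le //|x|x y z _ + _]; first by split.
exact: word_le_trans.
Qed.

Lemma Ble_of_rum N nu i k T T' :
  0 < i <= N -> B N nu T -> B N nu T' ->
  rum i (reading_word T) 0 0 None = Some k ->
  reading_word T' = set_nth 0 (reading_word T) k i.+1 -> Ble N nu T T'.
Proof.
move=> hi BT BT' hk eT'; apply: rt_step; split; [|split] => //; exists i; split=> //.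
by apply: F_of_rum hk eT' _; case: BT => ->; case: BT' => ->.
Qed.

Lemma Ble_word_neq N nu T w W a s :
  a < size W -> s != nth 0 W a -> reading_word T = set_nth 0 W a s ->
  rum s (reading_word T) 0 0 None <> Some a ->
  Ble N nu T w -> reading_word w <> W.
Proof.
move=> ha hs eT hrum /clos_rt_rt1n_iff [|t w' [_ [_ [i [_ Ft]]]] /clos_rt_rt1n_iff tw] ew.
  by move: hs; rewrite -ew eT nth_set_nth /= eqxx eqxx.
have [k [hk _ hki et]] := F_Some_word Ft.
have [_ /(_ k)] := Ble_word_le tw.
rewrite ew et nth_set_nth /= eqxx -hki eT nth_set_nth /=.
case: eqP => [ka _|_]; last by rewrite ltnn.
have si : s = i by rewrite -hki eT ka nth_set_nth /= eqxx.
by case: hrum; rewrite si -ka.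
Qed.

Lemma set_nth_squeeze (W w : seq nat) a1 a2 b1 b2 s1 s2 t1 t2 :
  a1 != a2 -> b1 != b2 -> a1 < size W ->
  word_le (set_nth 0 W a1 s1) w -> word_le (set_nth 0 W a2 s2) w ->
  word_le w (set_nth 0 W b1 t1) -> word_le w (set_nth 0 W b2 t2) -> w = W.
Proof.
move=> a12 b12 ha [sw lo1] [_ lo2] [_ up1] [_ up2].
apply: (eq_from_nth (x0 := 0)) => [|k _]; first by rewrite -sw size_set_nth; lia.
apply/eqP; rewrite eqn_leq; apply/andP; split.
  have := up1 k; have := up2 k; rewrite !nth_set_nth /=.
  by case: (eqVneq k b1) => [->|]; rewrite ?(negbTE b12).
have := lo1 k; have := lo2 k; rewrite !nth_set_nth /=.
by case: (eqVneq k a1) => [->|]; rewrite ?(negbTE a12).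
Qed.

Lemma set_nth_cat (T : Type) (x0 : T) u v j y :
  set_nth x0 (u ++ v) (size u + j) y = u ++ set_nth x0 v j y.
Proof. by elim: u => //= x u ->. Qed.

Lemma nth_nseq_cat (T : Type) (x0 : T) k x s j :
  nth x0 (nseq k x ++ s) j = if j < k then x else nth x0 s (j - k).
Proof. by rewrite nth_cat size_nseq nth_nseq; case: ltnP. Qed.

Lemma sorted_nseq_cat (T : Type) (leT : rel T) x s :
  reflexive leT -> sorted leT (x :: s) -> forall k, sorted leT (nseq k x ++ s).
Proof.
move=> leTT + k; case: k => [/path_sorted //|k] /= h.
by elim: k => [|k IH] //; rewrite cat_cons [path _ _ _]/= leTT IH.
Qed.

Lemma nth_lt_of_separated (R R' : seq nat) m j :
  0 < m -> (forall x, x \in R -> x < m) -> (forall y, y \in R' -> m <= y) ->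
  j < size R' -> nth 0 R j < nth 0 R' j.
Proof.
move=> m_gt0 ltR geR' hj; have := geR' _ (mem_nth 0 hj).
by case: (ltnP j (size R)) => [/(mem_nth 0)/ltR|/(nth_default 0)->] /=; lia.
Qed.

Section Counterexample.

Variables (la : seq nat) (n q : nat).

Local Notation part r := (nth 0 la r).

Definition tab_row e1 e2 e3 e4 r : seq nat :=
  if r < q then nseq (part r) r.+1
  else if r == q then nseq (part q - 2) q.+1 ++ [:: e1; e2]
  else if r == q.+1 then nseq (part q.+1 - 1) q.+2 ++ [:: e3]
  else if r == q.+2 then nseq (part q.+2 - 1) q.+3 ++ [:: e4]
  else nseq (part r) (n - size la + r).+2.

Definition tab e1 e2 e3 e4 : tableau := mkseq (tab_row e1 e2 e3 e4) (size la).

Definition row_min r := if r <= q.+2 then r.+1 else (n - size la + r).+2.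
Definition row_max r :=
  if r < q then r.+1 else if r <= q.+2 then q.+4 else (n - size la + r).+2.

Lemma row_max_lt_min r : r != q -> r != q.+1 -> row_max r < row_min r.+1.
Proof. by rewrite /row_min /row_max => ? ?; repeat case: ifP => ?; lia. Qed.

Hypothesis la_size : q.+3 <= size la.
Hypothesis la_n : size la <= n.
Hypothesis part_gap : part q.+1 + 2 <= part q.
Hypothesis part_dec : part q.+2 <= part q.+1.
Hypothesis part_pos : 0 < part q.+2.

Lemma row_range r : r < size la -> 0 < row_min r /\ row_max r <= n.+1.
Proof. by rewrite /row_min /row_max => hr; repeat case: ifP => ?; lia. Qed.

Section Rows.

Variables e1 e2 e3 e4 : nat.
Local Notation row := (tab_row e1 e2 e3 e4).

Lemma tab_row_up r : r < q -> row r = nseq (part r) r.+1.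
Proof. by move=> hr; rewrite /tab_row; repeat case: ifP => ? //; lia. Qed.

Lemma tab_row_q : row q = nseq (part q - 2) q.+1 ++ [:: e1; e2].
Proof. by rewrite /tab_row; repeat case: ifP => ? //; lia. Qed.

Lemma tab_row_q1 : row q.+1 = nseq (part q.+1 - 1) q.+2 ++ [:: e3].
Proof. by rewrite /tab_row; repeat case: ifP => ? //; lia. Qed.

Lemma tab_row_q2 : row q.+2 = nseq (part q.+2 - 1) q.+3 ++ [:: e4].
Proof. by rewrite /tab_row; repeat case: ifP => ? //; lia. Qed.

Lemma tab_row_low r : q.+2 < r -> row r = nseq (part r) (n - size la + r).+2.
Proof. by move=> hr; rewrite /tab_row; repeat case: ifP => ? //; lia. Qed.

Lemma tab_row_size r : r < size la -> size (row r) = part r.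
Proof.
have [hr|[->|[->|[->|hr]]]] : r < q \/ r = q \/ r = q.+1 \/ r = q.+2 \/ q.+2 < r by lia.
- by rewrite tab_row_up // size_nseq.
- rewrite tab_row_q size_cat size_nseq /=; lia.
- rewrite tab_row_q1 size_cat size_nseq /=; lia.
- rewrite tab_row_q2 size_cat size_nseq /=; lia.
- by rewrite tab_row_low // size_nseq.
Qed.

Hypothesis e1_e2 : q < e1 <= e2.
Hypothesis e2_le : e2 <= q.+4.
Hypothesis e3_e4 : q.+1 < e3 < e4.
Hypothesis e4_le : e4 <= q.+4.
Hypothesis e4_gt : q.+2 < e4.

Lemma tab_row_bounded r : all (fun x => row_min r <= x <= row_max r) (row r).
Proof.
rewrite /row_min /row_max.
have [hr|[->|[->|[->|hr]]]] : r < q \/ r = q \/ r = q.+1 \/ r = q.+2 \/ q.+2 < r by lia.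
- rewrite tab_row_up // all_nseq; repeat case: ifP => ?; lia.
- rewrite tab_row_q all_cat all_nseq /=; repeat case: ifP => ?; lia.
- rewrite tab_row_q1 all_cat all_nseq /=; repeat case: ifP => ?; lia.
- rewrite tab_row_q2 all_cat all_nseq /=; repeat case: ifP => ?; lia.
- rewrite tab_row_low // all_nseq; repeat case: ifP => ?; lia.
Qed.

Lemma tab_row_sorted r : sorted leq (row r).
Proof.
have [hr|[->|[->|[->|hr]]]] : r < q \/ r = q \/ r = q.+1 \/ r = q.+2 \/ q.+2 < r by lia.
- by rewrite tab_row_up // -[nseq _ _]cats0; apply: (sorted_nseq_cat leqnn).
- by rewrite tab_row_q; apply: (sorted_nseq_cat leqnn) => /=; lia.
- by rewrite tab_row_q1; apply: (sorted_nseq_cat leqnn) => /=; lia.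
- by rewrite tab_row_q2; apply: (sorted_nseq_cat leqnn) => /=; lia.
- by rewrite tab_row_low // -[nseq _ _]cats0; apply: (sorted_nseq_cat leqnn).
Qed.

(* Only rows q and q + 1 overlap in value with the row below them. *)
Lemma tab_row_col r j : r.+1 < size la -> j < size (row r.+1) ->
  nth 0 (row r) j < nth 0 (row r.+1) j.
Proof.
move=> hr; case: (eqVneq r q) => [->|rq]; last case: (eqVneq r q.+1) => [->|rq1].
- rewrite tab_row_q tab_row_q1 size_cat size_nseq addn1 ltnS !nth_nseq_cat => hj.
  case: (ltnP j (part q.+1 - 1)) => hjb; first by case: ifP => ?; lia.
  rewrite (_ : j - (part q.+1 - 1) = 0) /=; last lia.
  by case: ifP => ?; lia.
- rewrite tab_row_q1 tab_row_q2 size_cat size_nseq addn1 ltnS !nth_nseq_cat => hj.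
  case: (ltnP j (part q.+2 - 1)) => hjc; first by case: ifP => ?; lia.
  rewrite (_ : j - (part q.+2 - 1) = 0) /=; last lia.
  case: ifP => ?; first lia.
  by rewrite (_ : j - (part q.+1 - 1) = 0) /=; lia.
have sep := row_max_lt_min rq rq1.
apply: (nth_lt_of_separated (m := row_min r.+1)) => [|x|y].
- by have [] := row_range hr.
- by move/(allP (tab_row_bounded r)); lia.
- by move/(allP (tab_row_bounded r.+1)); lia.
Qed.

Lemma tab_ssyt : B n la (tab e1 e2 e3 e4).
Proof.
have nth_tab r : r < size la -> nth [::] (tab e1 e2 e3 e4) r = row r.
  exact: nth_mkseq.
split.
- apply: (eq_from_nth (x0 := 0)) => [|r]; rewrite size_map size_mkseq // => hr.
  by rewrite (nth_map [::]) ?size_mkseq // nth_tab // tab_row_size.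
- apply/(all_nthP [::]) => r; rewrite size_mkseq => hr; rewrite nth_tab //.
  have [min_gt0 max_le] := row_range hr.
  by apply: sub_all (tab_row_bounded r) => x /andP [? ?]; lia.
- apply/(all_nthP [::]) => r; rewrite size_mkseq => hr.
  by rewrite nth_tab //; apply: tab_row_sorted.
- move=> r j; rewrite size_mkseq => hr; rewrite !nth_tab //; last lia.
  exact: tab_row_col.
Qed.

End Rows.

Definition upper_rows : tableau := [seq nseq (part r) r.+1 | r <- iota 0 q].
Definition lower_rows : tableau :=
  [seq nseq (part r) (n - size la + r).+2 | r <- iota q.+3 (size la - q.+3)].
Definition upper_word := flatten (rev upper_rows).
Definition lower_word := flatten (rev lower_rows).

Lemma tab_cat e1 e2 e3 e4 :
  tab e1 e2 e3 e4 = upper_rows ++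
    [:: tab_row e1 e2 e3 e4 q; tab_row e1 e2 e3 e4 q.+1; tab_row e1 e2 e3 e4 q.+2]
    ++ lower_rows.
Proof.
rewrite /tab /mkseq (_ : size la = q + (3 + (size la - q.+3))); last lia.
rewrite !iotaD !map_cat add0n addn3; congr (_ ++ _ ++ _).
  by apply/eq_in_map => r; rewrite mem_iota => /andP [_ hr]; apply: tab_row_up.
by apply/eq_in_map => r; rewrite mem_iota => /andP [hr _]; apply: tab_row_low.
Qed.

Lemma tab_word e1 e2 e3 e4 :
  reading_word (tab e1 e2 e3 e4) =
  lower_word ++ nseq (part q.+2 - 1) q.+3 ++ e4 :: nseq (part q.+1 - 1) q.+2 ++
  e3 :: nseq (part q - 2) q.+1 ++ e1 :: e2 :: upper_word.
Proof.
rewrite /reading_word tab_cat tab_row_q tab_row_q1 tab_row_q2.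
by rewrite !rev_cat !flatten_cat /= -!catA.
Qed.

Lemma rum_lower_word i v pos c acc : i < q.+4 ->
  rum i (lower_word ++ v) pos c acc = rum i v (pos + size lower_word) c acc.
Proof.
move=> hi; apply: rum_cat_skip; apply/allP => x /flattenP [row].
by rewrite mem_rev => /mapP [r]; rewrite mem_iota => hr -> /nseqP [-> _]; lia.
Qed.

Lemma rum_upper_word i pos c acc : q < i -> rum i upper_word pos c acc = acc.
Proof.
move=> hi; rewrite -[upper_word]cats0 rum_cat_skip //; apply/allP => x /flattenP [row].
by rewrite mem_rev => /mapP [r]; rewrite mem_iota => hr -> /nseqP [-> _]; lia.
Qed.

Definition tab_pos4 := size lower_word + (part q.+2 - 1).
Definition tab_pos3 := tab_pos4 + (part q.+1 - 1).+1.
Definition tab_pos1 := tab_pos3 + (part q - 2).+1.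
Definition tab_pos2 := tab_pos1.+1.

Lemma tab_word_set1 e1 e2 e3 e4 y :
  reading_word (tab y e2 e3 e4) = set_nth 0 (reading_word (tab e1 e2 e3 e4)) tab_pos1 y.
Proof.
rewrite !tab_word (_ : tab_pos1 = size lower_word + (size (nseq (part q.+2 - 1) q.+3) +
  (size (nseq (part q.+1 - 1) q.+2) + (size (nseq (part q - 2) q.+1) + 0).+1).+1)).
  by rewrite !set_nth_cat /= !set_nth_cat /= set_nth_cat.
by rewrite !size_nseq /tab_pos1 /tab_pos3 /tab_pos4; lia.
Qed.

Lemma tab_word_set2 e1 e2 e3 e4 y :
  reading_word (tab e1 y e3 e4) = set_nth 0 (reading_word (tab e1 e2 e3 e4)) tab_pos2 y.
Proof.
rewrite !tab_word (_ : tab_pos2 = size lower_word + (size (nseq (part q.+2 - 1) q.+3) +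
  (size (nseq (part q.+1 - 1) q.+2) + (size (nseq (part q - 2) q.+1) + 1).+1).+1)).
  by rewrite !set_nth_cat /= !set_nth_cat /= set_nth_cat.
by rewrite !size_nseq /tab_pos2 /tab_pos1 /tab_pos3 /tab_pos4; lia.
Qed.

Lemma tab_word_set3 e1 e2 e3 e4 y :
  reading_word (tab e1 e2 y e4) = set_nth 0 (reading_word (tab e1 e2 e3 e4)) tab_pos3 y.
Proof.
rewrite !tab_word (_ : tab_pos3 = size lower_word + (size (nseq (part q.+2 - 1) q.+3) +
  (size (nseq (part q.+1 - 1) q.+2) + 0).+1)).
  by rewrite !set_nth_cat /= set_nth_cat.
by rewrite !size_nseq /tab_pos3 /tab_pos4; lia.
Qed.

Lemma tab_word_set4 e1 e2 e3 e4 y :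
  reading_word (tab e1 e2 e3 y) = set_nth 0 (reading_word (tab e1 e2 e3 e4)) tab_pos4 y.
Proof.
rewrite !tab_word
  (_ : tab_pos4 = size lower_word + (size (nseq (part q.+2 - 1) q.+3) + 0)).
  by rewrite !set_nth_cat.
by rewrite size_nseq addn0.
Qed.

Lemma tab_pos2_lt e1 e2 e3 e4 : tab_pos2 < size (reading_word (tab e1 e2 e3 e4)).
Proof.
rewrite tab_word /tab_pos2 /tab_pos1 /tab_pos3 /tab_pos4.
by repeat rewrite (size_cat, size_nseq) /=; lia.
Qed.

Ltac rum_eval :=
  rewrite tab_word rum_lower_word; last lia;
  repeat (first [rewrite rum_nseq | rewrite rum_cons | rewrite rum_upper_word; last lia];
          repeat (case: ifP => ?; try lia));
  try (congr Some; unfold tab_pos2, tab_pos1, tab_pos3, tab_pos4; lia).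

Ltac tab_step i k :=
  apply: (@Ble_of_rum _ _ i k);
  [ lia | apply: tab_ssyt; lia | apply: tab_ssyt; lia | rum_eval
  | first [ exact: tab_word_set1 | exact: tab_word_set2
          | exact: tab_word_set3 | exact: tab_word_set4 ] ].

Definition tab_x := tab q.+1 q.+3 q.+2 q.+4.
Definition tab_y := tab q.+1 q.+4 q.+2 q.+3.
Definition tab_z1 := tab q.+1 q.+4 q.+3 q.+4.
Definition tab_z2 := tab q.+3 q.+4 q.+2 q.+4.
Definition tab_v := tab q.+1 q.+4 q.+2 q.+4.

Lemma tab_x_le_z1 : Ble n la tab_x tab_z1.
Proof.
apply: (rt_trans _ _ _ (tab q.+1 q.+3 q.+3 q.+4)); first tab_step q.+2 tab_pos3.
tab_step q.+3 tab_pos2.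
Qed.

Lemma tab_x_le_z2 : Ble n la tab_x tab_z2.
Proof.
apply: (rt_trans _ _ _ (tab q.+2 q.+3 q.+2 q.+4)); first tab_step q.+1 tab_pos1.
apply: (rt_trans _ _ _ (tab q.+3 q.+3 q.+2 q.+4)); first tab_step q.+2 tab_pos1.
tab_step q.+3 tab_pos2.
Qed.

Lemma tab_y_le_z1 : Ble n la tab_y tab_z1.
Proof.
apply: (rt_trans _ _ _ tab_v); first tab_step q.+3 tab_pos4.
tab_step q.+2 tab_pos3.
Qed.

Lemma tab_y_le_z2 : Ble n la tab_y tab_z2.
Proof.
apply: (rt_trans _ _ _ (tab q.+2 q.+4 q.+2 q.+3)); first tab_step q.+1 tab_pos1.
apply: (rt_trans _ _ _ (tab q.+2 q.+4 q.+2 q.+4)); first tab_step q.+3 tab_pos4.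
tab_step q.+2 tab_pos1.
Qed.

Lemma tab_word_of_bounds w :
  Ble n la tab_x w -> Ble n la tab_y w -> Ble n la w tab_z1 -> Ble n la w tab_z2 ->
  reading_word w = reading_word tab_v.
Proof.
move=> /Ble_word_le xw /Ble_word_le yw /Ble_word_le wz1 /Ble_word_le wz2.
apply: (@set_nth_squeeze _ _ tab_pos2 tab_pos4 tab_pos3 tab_pos1 q.+3 q.+3 q.+3 q.+3).
- by unfold tab_pos2, tab_pos1, tab_pos3, tab_pos4; lia.
- by unfold tab_pos1, tab_pos3; lia.
- exact: tab_pos2_lt.
- by rewrite -tab_word_set2.
- by rewrite -tab_word_set4.
- by rewrite -tab_word_set3.
- by rewrite -tab_word_set1.
Qed.

Lemma tab_word_v_not_above_x w : Ble n la tab_x w -> reading_word w <> reading_word tab_v.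
Proof.
apply: (Ble_word_neq (a := tab_pos2) (s := q.+3)); first exact: tab_pos2_lt.
- by rewrite /tab_v (tab_word_set2 _ q.+3) nth_set_nth /= eqxx; lia.
- exact: tab_word_set2.
rewrite /tab_x; rum_eval; last by [].
move=> [e]; have := leq_pred (0 + size lower_word + (part q.+2 - 1)).
by unfold tab_pos2, tab_pos1, tab_pos3, tab_pos4 in e; lia.
Qed.

Lemma tab_not_lattice : ~ is_lattice (B n la) (Ble n la).
Proof.
have [Bx By] : B n la tab_x /\ B n la tab_y by split; apply: tab_ssyt; lia.
have [Bz1 Bz2] : B n la tab_z1 /\ B n la tab_z2 by split; apply: tab_ssyt; lia.
move=> /(_ _ _ Bx By) [[w [_ [xw [yw w_least]]]] _].
apply: (tab_word_v_not_above_x xw); apply: tab_word_of_bounds => //.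
  exact: w_least Bz1 tab_x_le_z1 tab_y_le_z1.
exact: w_least Bz2 tab_x_le_z2 tab_y_le_z2.
Qed.

End Counterexample.

Theorem lemma5p5 (la : seq nat) (n : nat) :
  is_partition la -> size la <= n ->
  (exists p, 1 <= p /\ p + 2 <= size la /\
     nth 0 la p + 2 <= nth 0 la p.-1 /\ nth 0 la p.+1 <= nth 0 la p) ->
  ~ is_lattice (B n la) (Ble n la).
Proof.
move=> [_ la_pos] la_n [p [p_gt0 [p_size [gap dec]]]].
have [q ep] : exists q, p = q.+1 by exists p.-1; lia.
subst p; rewrite /= in gap.
apply: (tab_not_lattice (q := q)) => //; first lia.
by apply: (all_nthP 0 la_pos); lia.
Qed.
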